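(* Let $D$ be a division algebra and let $\sigma_1,\sigma_2$ be two commuting automorphisms of $D$. If $\sigma_1^{k_1}\circ\sigma_2^{-k_2}$ is not an inner automorphism of $D$ for any positive integers $k_1,k_2$, then the tuple $(\sigma_1,\sigma_2)$ is not automorphically normalizable over $D$.
   Context: All rings are associative with unity. An inner automorphism of $D$ is a map $r\mapsto crc^{-1}$ with $c\in D^\times$. $D[t_1,t_2;\sigma_1,\sigma_2]$ is the skew polynomial ring in two commuting variables with $t_ia=\sigma_i(a)t_i$ for $a\in D$. For a ring $S\supseteq D$, $a\in S$ is automorphic over $D$ with respect to $\tau$ if $ab=\tau(b)a$ for all $b\in D$. Commuting $a_1,\ldots,a_m\in S$ are (left) algebraically independent over $D$ if monomials in them are left linearly independent over $D$. $S$ is automorphically normalizable over $D$ if there exist $m\ge0$ and commuting $a_1,\ldots,a_m\in S$, automorphic over $D$ with respect to pairwise commuting automorphisms, left algebraically independent over $D$, such that $S$ is finitely generated as a left module over the subring $D[a_1,\ldots,a_m]$ generated by $D\cup\{a_1,\ldots,a_m\}$. The tuple $(\sigma_1,\sigma_2)$ is automorphically normalizable over $D$ if every quotient of $D[t_1,t_2;\sigma_1,\sigma_2]$ by a proper two-sided ideal is automorphically normalizable over $D$. *)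

From HB Require Import structures.
From mathcomp Require Import all_boot all_order all_algebra.
Set Implicit Arguments. Unset Strict Implicit. Unset Printing Implicit Defensive.
Import GRing.Theory.
Local Open Scope ring_scope.

(* The skew polynomial ring D[t1,t2;s1,s2] is represented on the additive
   group {poly {poly D}}: the coefficient p`_j`_i is the (left) coefficient of
   the monomial t1^i t2^j.  Multiplication is the skew one:
   (a t1^i t2^j)(b t1^k t2^l) = a s1^i (s2^j b) t1^(i+k) t2^(j+l). *)
Definition skewpoly (D : nzRingType) := {poly {poly D}}.

Definition spC (D : nzRingType) (c : D) : skewpoly D := (c%:P)%:P.
Definition spt1 (D : nzRingType) : skewpoly D := ('X : {poly D})%:P.
Definition spt2 (D : nzRingType) : skewpoly D := 'X.

Definition spmul (D : nzRingType) (s1 s2 : D -> D) (p q : skewpoly D)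
  : skewpoly D :=
  \sum_(j < size p) \sum_(i < size p`_j) \sum_(l < size q) \sum_(k < size q`_l)
     (((p`_j`_i * iter i s1 (iter j s2 q`_l`_k)) *: 'X^(i + k))%:P
        * 'X^(j + l)).

Definition spexp (D : nzRingType) (s1 s2 : D -> D) (x : skewpoly D) (n : nat)
  : skewpoly D := iter n (spmul s1 s2 x) 1.

Definition spmono (D : nzRingType) (s1 s2 : D -> D) (m : nat)
  (a : 'I_m -> skewpoly D) (al : m.-tuple nat) : skewpoly D :=
  \big[spmul s1 s2/1]_(i < m) spexp s1 s2 (a i) (tnth al i).

Definition sp_ideal (D : nzRingType) (s1 s2 : D -> D)
  (I : skewpoly D -> Prop) : Prop :=
  [/\ I 0, (forall x y, I x -> I y -> I (x - y)) &
      forall r x, I x -> I (spmul s1 s2 r x) /\ I (spmul s1 s2 x r)].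

Definition is_inner (D : unitRingType) (f : D -> D) : Prop :=
  exists c : D, c \is a GRing.unit /\ forall r, f r = c * r * c^-1.

(* Elements of the quotient S = D[t1,t2;s1,s2]/I are represented by
   elements of D[t1,t2;s1,s2]; equality in S is congruence modulo I.
   D is a subring of S via spC.
   [sp_gen_subring s1 s2 a y]: y lies in the subring of D[t1,t2;s1,s2]
   generated by D and the a_i (its image in S is the subring D[a_1..a_m]). *)
Definition sp_gen_subring (D : nzRingType) (s1 s2 : D -> D) (m : nat)
  (a : 'I_m -> skewpoly D) (y : skewpoly D) : Prop :=
  forall P : skewpoly D -> Prop,
    (forall b, P (spC b)) -> (forall i, P (a i)) ->
    (forall u v, P u -> P v -> P (u - v)) ->
    (forall u v, P u -> P v -> P (spmul s1 s2 u v)) -> P y.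

Definition quot_aut_normalizable (D : nzRingType) (s1 s2 : D -> D)
  (I : skewpoly D -> Prop) : Prop :=
  let mul := spmul s1 s2 in
  exists (m : nat) (a : 'I_m -> skewpoly D) (tau : 'I_m -> {rmorphism D -> D}),
    (forall i, bijective (tau i)) /\
    (forall i j, forall b, tau i (tau j b) = tau j (tau i b)) /\
    [/\
        (forall i j, I (mul (a i) (a j) - mul (a j) (a i))),
        (* a_i is automorphic over D w.r.t. tau_i : a_i b = tau_i(b) a_i in S *)
        (forall i b, I (mul (a i) (spC b) - mul (spC (tau i b)) (a i))),
        (* left algebraic independence over D in S *)
        (forall (s : seq (m.-tuple nat)) (c : m.-tuple nat -> D), uniq s ->
            I (\sum_(al <- s) mul (spC (c al)) (spmono s1 s2 a al)) ->
            forall al, al \in s -> c al = 0) &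
        (* S is a finitely generated left D[a_1..a_m]-module *)
        (exists g : seq (skewpoly D), forall x : skewpoly D,
          exists r : seq (skewpoly D),
            [/\ size r = size g,
                (forall y, y \in r -> sp_gen_subring s1 s2 a y) &
                I (x - \sum_(k < size g) mul r`_k g`_k)])].

Definition tuple_aut_normalizable (D : nzRingType) (s1 s2 : D -> D) : Prop :=
  forall I : skewpoly D -> Prop, sp_ideal s1 s2 I -> ~ I 1 ->
    quot_aut_normalizable s1 s2 I.

From HB Require Import structures.
From mathcomp Require Import all_boot all_order all_algebra.
From Stdlib Require Import Classical.
Import GRing.Theory.
Set Implicit Arguments. Unset Strict Implicit.
Local Open Scope ring_scope.

(* Take the proper ideal (t1 t2), so that S = D[t1,t2;s1,s2]/(t1 t2) is D[t1;s1]
   and D[t2;s2] glued along D.  An element a of S that is automorphic for tau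
   satisfies u s1^i(b) = tau(b) u for its coefficient u of t1^i and
   w s2^j(b) = tau(b) w for its coefficient w of t2^j; as D is a division ring,
   u, w <> 0 with i, j > 0 would make s1^i s2^-j inner.  Hence every a_l lies in
   D[t1;s1] or in D[t2;s2].  If all of them lie in D[t1;s1], so does D[a_1..a_m],
   and t2^N for large N is outside any finitely generated D[a]-submodule; the
   same holds with t1, t2 exchanged.  Otherwise x = a_q in D[t1;s1] and
   y = a_p in D[t2;s2] satisfy x y = tau(y_0) x + x_0 y - x_0 y_0 in S, a left
   D-linear relation between the monomials x y, x, y, 1. *)

Lemma sum_ord_trunc (R : nmodType) n N (F : nat -> R) :
  (forall k, (n <= k)%N -> F k = 0) ->
  \sum_(k < n) (if (N < k)%N then 0 else F k) = \sum_(k < N.+1) F k.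
Proof.
move=> F0; pose G k := if (N < k)%N then 0 else F k.
rewrite (big_ord_widen (n + N.+1) G (leq_addr _ _)).
rewrite (big_ord_widen (n + N.+1) F (leq_addl _ _)) big_mkcond [RHS]big_mkcond.
apply: eq_bigr => k _; rewrite /G ltnS.
by case: (leqP k N) => _; case: (ltnP k n) => // /F0->.
Qed.

Lemma big_lunit_filter (R T : Type) (op : R -> R -> R) (e : R) (r : seq T)
    (P : pred T) (F : T -> R) :
  left_id e op -> (forall i, ~~ P i -> F i = e) ->
  \big[op/e]_(i <- r) F i = \big[op/e]_(i <- r | P i) F i.
Proof.
move=> opl Fe; elim: r => [|i r IHr]; rewrite ?big_nil // !big_cons IHr.
by case: ifPn => // /Fe ->; apply: opl.
Qed.

Lemma filter_pred2_uniq (T : eqType) (s : seq T) x y :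
  uniq s -> x \in s -> y \in s -> x != y ->
  filter (pred2 x y) s = [:: x; y] \/ filter (pred2 x y) s = [:: y; x].
Proof.
elim: s => // z s IHs /andP[zs us]; rewrite !inE /=.
have filter1 (P : pred T) v : v \in s -> {in s, P =1 pred1 v} -> filter P s = [:: v].
  by move=> vs Pv; rewrite -(filter_pred1_uniq us vs); apply: eq_in_filter.
have z_out w : w \in s -> (w == z) = false.
  by move=> ws; apply: contraNF zs => /eqP <-.
case: (eqVneq z x) => [<-|zx] xs ys xy.
  left; congr (_ :: _); apply: filter1 => [|w ws /=].
    by rewrite eq_sym (negbTE xy) in ys.
  by rewrite z_out.
case: (eqVneq z y) => [<-|zy] /=.
  by right; congr (_ :: _); apply: filter1 => // w ws /=; rewrite z_out ?orbF.
by rewrite eq_sym (negbTE zy) in ys; apply: IHs.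
Qed.

Lemma iter_cancel (T : Type) (f g : T -> T) n :
  cancel f g -> cancel (iter n f) (iter n g).
Proof. by move=> fK; elim: n => // n IHn x; rewrite iterSr /= fK IHn. Qed.

Lemma intertwined_is_inner (D : unitRingType) (f g ginv h : D -> D) (u w : D) :
  u \is a GRing.unit -> w \is a GRing.unit -> cancel ginv g ->
  (forall b, u * f b = h b * u) -> (forall b, w * g b = h b * w) ->
  is_inner (fun r => f (ginv r)).
Proof.
move=> uU wU ginvK uf wg; exists (u^-1 * w); split=> [|r].
  by rewrite unitrMl ?unitrV.
have -> : f (ginv r) = u^-1 * (h (ginv r) * u) by rewrite -uf mulKr.
have -> : h (ginv r) = w * r * w^-1 by rewrite -[in RHS](ginvK r) wg (mulrK wU).
by rewrite invrM ?unitrV // invrK !mulrA.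
Qed.

Lemma spC1 (D : nzRingType) : spC (1 : D) = 1.
Proof. by rewrite /spC !polyC1. Qed.

(* The two-sided ideal generated by t1 t2. *)
Definition mixed_ideal (D : nzRingType) (p : skewpoly D) : Prop :=
  (forall i, p`_0`_i = 0) /\ (forall j, p`_j`_0 = 0).

Definition no_t1_terms (D : nzRingType) (y : skewpoly D) : Prop :=
  forall i, (0 < i)%N -> y`_0`_i = 0.

Definition no_t2_terms (D : nzRingType) (y : skewpoly D) : Prop :=
  forall j, (0 < j)%N -> y`_j`_0 = 0.

Lemma mixed_ideal_proper (D : nzRingType) : ~ mixed_ideal (1 : skewpoly D).
Proof. by case=> /(_ 0%N) /eqP; rewrite !coef1 /= oner_eq0. Qed.

Section SkewCoefficients.

Variables (D : nzRingType) (s1 s2 : D -> D).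
Hypotheses (s10 : s1 0 = 0) (s20 : s2 0 = 0) (s11 : s1 1 = 1) (s21 : s2 1 = 1).
Local Notation mul := (spmul s1 s2).

Let iter0 (f : D -> D) n : f 0 = 0 -> iter n f 0 = 0.
Proof. by move=> f0; elim: n => //= n ->. Qed.

Let twist (p : skewpoly D) j i (d : D) := p`_j`_i * iter i s1 (iter j s2 d).

Lemma spmul_horner (p q : skewpoly D) :
  mul p q = \sum_(j < size p) 'X^j * \sum_(i < size p`_j)
              map_poly (fun Q => 'X^i * map_poly (twist p j i) Q) q.
Proof.
rewrite /spmul; apply: eq_bigr => j _; rewrite mulr_sumr; apply: eq_bigr => i _.
rewrite /map_poly poly_def mulr_sumr; apply: eq_bigr => l _.
rewrite -mul_polyC mulrA -commr_polyXn -mulrA -exprD.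
rewrite poly_def mulr_sumr rmorph_sum mulr_suml; apply: eq_bigr => k _.
by rewrite -!mul_polyC mulrA -commr_polyXn -mulrA -exprD.
Qed.

Lemma coef_spmul (p q : skewpoly D) J I :
  (mul p q)`_J`_I = \sum_(j < J.+1) \sum_(i < I.+1)
                      p`_j`_i * iter i s1 (iter j s2 q`_(J - j)`_(I - i)).
Proof.
have tw0 j i : twist p j i 0 = 0 by rewrite /twist !iter0 ?mulr0.
pose T j i := p`_j`_i * iter i s1 (iter j s2 q`_(J - j)`_(I - i)).
rewrite spmul_horner !coef_sum.
rewrite -(@sum_ord_trunc _ (size p) J (fun j => \sum_(i < I.+1) T j i)); last first.
  by move=> j /(nth_default 0) pj; apply: big1 => i _; rewrite /T pj coef0 mul0r.
apply: eq_bigr => j _; rewrite coefXnM; case: ltnP => _; first by rewrite coef0.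
rewrite !coef_sum -(@sum_ord_trunc _ (size p`_j) I (T j)); last first.
  by move=> i /(nth_default 0) pji; rewrite /T pji mul0r.
apply: eq_bigr => i _; rewrite coef_map_id0 ?map_poly0 ?mulr0 //.
by rewrite coefXnM; case: ltnP => _; rewrite ?coef0 ?coef_map_id0.
Qed.

Lemma coef_spmul_t1 (p q : skewpoly D) I :
  (mul p q)`_0`_I = \sum_(i < I.+1) p`_0`_i * iter i s1 q`_0`_(I - i).
Proof. by rewrite coef_spmul big_ord1. Qed.

Lemma coef_spmul_t2 (p q : skewpoly D) J :
  (mul p q)`_J`_0 = \sum_(j < J.+1) p`_j`_0 * iter j s2 q`_(J - j)`_0.
Proof. by rewrite coef_spmul; apply: eq_bigr => j _; rewrite big_ord1. Qed.

Lemma coef_spC (b : D) J I :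
  (spC b)`_J`_I = if (J == 0%N) && (I == 0%N) then b else 0.
Proof. by rewrite /spC coefC; case: eqP => _ /=; rewrite ?coefC ?coef0 ?if_same. Qed.

Lemma spmulCl (c : D) (x : skewpoly D) : mul (spC c) x = spC c * x.
Proof.
apply/polyP => J; apply/polyP => I; rewrite coef_spmul !coefCM.
rewrite big_ord_recl [X in _ + X]big1 ?addr0 => [|j _]; last first.
  by apply: big1 => i _; rewrite coef_spC mul0r.
rewrite big_ord_recl [X in _ + X]big1 ?addr0 => [|i _]; last first.
  by rewrite coef_spC /= mul0r.
by rewrite coef_spC !subn0.
Qed.

Lemma spmul1l (x : skewpoly D) : mul 1 x = x.
Proof. by rewrite -spC1 spmulCl spC1 mul1r. Qed.

Lemma coef_spmulCr (x : skewpoly D) (b : D) J I :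
  (mul x (spC b))`_J`_I = x`_J`_I * iter I s1 (iter J s2 b).
Proof.
rewrite coef_spmul big_ord_recr /= [X in X + _]big1 ?add0r => [|j _]; last first.
  by apply: big1 => i _; rewrite coef_spC subn_eq0 leqNgt ltn_ord !iter0 ?mulr0.
rewrite big_ord_recr /= [X in X + _]big1 ?add0r => [|i _]; last first.
  by rewrite coef_spC subnn eqxx subn_eq0 leqNgt ltn_ord !iter0 ?mulr0.
by rewrite coef_spC !subnn.
Qed.

Lemma spmul1r (x : skewpoly D) : mul x 1 = x.
Proof.
have iter1 (f : D -> D) n : f 1 = 1 -> iter n f 1 = 1.
  by move=> f1; elim: n => //= n ->.
apply/polyP => J; apply/polyP => I.
by rewrite -spC1 coef_spmulCr !iter1 ?mulr1.
Qed.

Lemma sp_ideal_mixed : sp_ideal s1 s2 (@mixed_ideal D).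
Proof.
split=> [|x y [x1 x2] [y1 y2]|r x [x1 x2]].
- by split=> i; rewrite !coef0.
- by split=> i; rewrite !coefB ?x1 ?y1 ?x2 ?y2 subrr.
split; split=> i; rewrite ?coef_spmul_t1 ?coef_spmul_t2; apply: big1 => j _;
  by rewrite ?x1 ?x2 ?iter0 ?mulr0 ?mul0r.
Qed.

Lemma mixed_automorphic_t1 (x : skewpoly D) b c :
  mixed_ideal (mul x (spC b) - spC c * x) ->
  forall i, x`_0`_i * iter i s1 b = c * x`_0`_i.
Proof.
by case=> + _ i => /(_ i) /eqP; rewrite !coefB coef_spmulCr !coefCM subr_eq0 => /eqP.
Qed.

Lemma mixed_automorphic_t2 (x : skewpoly D) b c :
  mixed_ideal (mul x (spC b) - spC c * x) ->
  forall j, x`_j`_0 * iter j s2 b = c * x`_j`_0.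
Proof.
by case=> _ + j => /(_ j) /eqP; rewrite !coefB coef_spmulCr !coefCM subr_eq0 => /eqP.
Qed.

Lemma coef_spmul_no_t1l (y x : skewpoly D) I :
  no_t1_terms y -> (mul y x)`_0`_I = y`_0`_0 * x`_0`_I.
Proof.
move=> y1; rewrite coef_spmul_t1 big_ord_recl big1 ?addr0 ?subn0 // => i _.
by rewrite y1 ?mul0r.
Qed.

Lemma coef_spmul_no_t2l (y x : skewpoly D) J :
  no_t2_terms y -> (mul y x)`_J`_0 = y`_0`_0 * x`_J`_0.
Proof.
move=> y2; rewrite coef_spmul_t2 big_ord_recl big1 ?addr0 ?subn0 // => j _.
by rewrite y2 ?mul0r.
Qed.

Lemma sp_gen_subring_no_t1_terms m (a : 'I_m -> skewpoly D) y :
  (forall l, no_t1_terms (a l)) -> sp_gen_subring s1 s2 a y -> no_t1_terms y.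
Proof.
move=> a1; apply=> // [b i i_gt0|u v u1 v1 i i_gt0|u v u1 v1 i i_gt0].
- by rewrite coef_spC /= (gtn_eqF i_gt0).
- by rewrite !coefB u1 ?v1 ?subr0.
- by rewrite coef_spmul_no_t1l // v1 ?mulr0.
Qed.

Lemma sp_gen_subring_no_t2_terms m (a : 'I_m -> skewpoly D) y :
  (forall l, no_t2_terms (a l)) -> sp_gen_subring s1 s2 a y -> no_t2_terms y.
Proof.
move=> a2; apply=> // [b j j_gt0|u v u2 v2 j j_gt0|u v u2 v2 j j_gt0].
- by rewrite coef_spC (gtn_eqF j_gt0).
- by rewrite !coefB u2 ?v2 ?subr0.
- by rewrite coef_spmul_no_t2l // v2 ?mulr0.
Qed.

Lemma coef_spmul_no_t2r (x y : skewpoly D) J :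
  no_t2_terms y -> (mul x y)`_J`_0 = x`_J`_0 * iter J s2 y`_0`_0.
Proof.
move=> y2; rewrite coef_spmul_t2 big_ord_recr /= big1 ?add0r ?subnn // => j _.
by rewrite y2 ?iter0 ?mulr0 // subn_gt0.
Qed.

Lemma mixed_relation (x y : skewpoly D) (tau : D -> D) :
  no_t1_terms x -> no_t2_terms y ->
  (forall b, mixed_ideal (mul x (spC b) - spC (tau b) * x)) ->
  mixed_ideal (mul x y - (spC (tau y`_0`_0) * x + spC x`_0`_0 * y
                          - spC (x`_0`_0 * y`_0`_0))).
Proof.
move=> x1 y2 x_aut; have x_t1 := mixed_automorphic_t1 (x_aut _).
split=> [I|J]; rewrite !coefB !coefD !coefCM coef_spC.
  rewrite coef_spmul_no_t1l //; case: (posnP I) => [->|I_gt0] /=.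
    by rewrite -[in tau _ * _](x_t1 _ 0%N) addrK subrr.
  by rewrite (x1 I I_gt0) mulr0 add0r subr0 subrr.
rewrite coef_spmul_no_t2r // (mixed_automorphic_t2 (x_aut _)) andbC.
case: (posnP J) => [->|J_gt0] /=; first by rewrite addrK subrr.
by rewrite (y2 J J_gt0) mulr0 addr0 subr0 subrr.
Qed.

Lemma not_finite_over_no_t2_terms m (a : 'I_m -> skewpoly D) (g : seq (skewpoly D)) :
  (forall l, no_t2_terms (a l)) ->
  ~ (forall x, exists r, [/\ size r = size g,
       forall y, y \in r -> sp_gen_subring s1 s2 a y
     & mixed_ideal (x - \sum_(k < size g) mul r`_k g`_k)]).
Proof.
move=> a2 span; pose N := (\max_(y <- g) size y)%N.
have [r [size_r r_gen [_ /(_ N) /eqP]]] := span 'X^N.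
rewrite !coefB !coef_sum coefXn eqxx coef1 big1 ?subr0 ?oner_eq0 // => k _.
have r_k : r`_k \in r by rewrite mem_nth ?size_r.
have r2 := sp_gen_subring_no_t2_terms a2 (r_gen _ r_k).
have g_N : leq (size g`_k) N := leq_bigmax_seq _ (mem_nth 0 (ltn_ord k)) isT.
by rewrite coef_spmul_no_t2l // (nth_default 0 g_N) coef0 mulr0.
Qed.

Lemma not_finite_over_no_t1_terms m (a : 'I_m -> skewpoly D) (g : seq (skewpoly D)) :
  (forall l, no_t1_terms (a l)) ->
  ~ (forall x, exists r, [/\ size r = size g,
       forall y, y \in r -> sp_gen_subring s1 s2 a y
     & mixed_ideal (x - \sum_(k < size g) mul r`_k g`_k)]).
Proof.
move=> a1 span; pose size_t1 (y : skewpoly D) := size y`_0.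
pose N := (\max_(y <- g) size_t1 y)%N.
have [r [size_r r_gen [/(_ N) /eqP + _]]] := span ('X^N)%:P.
rewrite !coefB !coef_sum coefC coefXn eqxx big1 ?subr0 ?oner_eq0 // => k _.
have r_k : r`_k \in r by rewrite mem_nth ?size_r.
have r1 := sp_gen_subring_no_t1_terms a1 (r_gen _ r_k).
have g_N : leq (size g`_k`_0) N := leq_bigmax_seq _ (mem_nth 0 (ltn_ord k)) isT.
by rewrite coef_spmul_no_t1l // (nth_default 0 g_N) mulr0.
Qed.

Lemma spmono_indicator m (a : 'I_m -> skewpoly D) (S : pred 'I_m) :
  spmono s1 s2 a [tuple (S i : nat) | i < m]
  = \big[mul/1]_(i <- index_enum 'I_m | S i) a i.
Proof.
rewrite /spmono (big_lunit_filter (P := S) _ spmul1l) => [|i /negbTE Si]; last first.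
  by rewrite tnth_mktuple Si.
by apply: eq_bigr => i Si; rewrite tnth_mktuple Si /spexp /= spmul1r.
Qed.

Lemma quadratic_relation_dependent m (a : 'I_m -> skewpoly D)
    (I : skewpoly D -> Prop) p q u v w :
  sp_ideal s1 s2 I -> p != q ->
  I (mul (a q) (a p) - mul (a p) (a q)) ->
  I (mul (a p) (a q) - (spC u * a p + spC v * a q - spC w)) ->
  exists (s : seq (m.-tuple nat)) (c : m.-tuple nat -> D),
    [/\ uniq s, I (\sum_(al <- s) mul (spC (c al)) (spmono s1 s2 a al))
      & exists2 al, al \in s & c al != 0].
Proof.
move=> [I0 IB _] pq comm_qp rel.
pose ind (S : pred 'I_m) : m.-tuple nat := [tuple (S i : nat) | i < m].
pose key (al : m.-tuple nat) := (tnth al p, tnth al q).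
pose c al : D := match key al with
  | (1, 1)%N => 1 | (1, 0)%N => - u | (0, 1)%N => - v | (0, 0)%N => w | _ => 0 end.
have qp : (q == p) = false by rewrite eq_sym (negbTE pq).
have [k_pq k_p k_q k_0] : [/\ key (ind (pred2 p q)) = (1, 1)%N,
  key (ind (pred1 p)) = (1, 0)%N, key (ind (pred1 q)) = (0, 1)%N
  & key (ind pred0) = (0, 0)%N].
  by rewrite /key !tnth_mktuple /= !eqxx qp (negbTE pq).
have enum_uniq := index_enum_uniq 'I_m.
have mono1 i : spmono s1 s2 a (ind (pred1 i)) = a i.
  rewrite spmono_indicator -big_filter filter_pred1_uniq ?mem_index_enum //.
  by rewrite big_cons big_nil spmul1r.
have mono0 : spmono s1 s2 a (ind pred0) = 1 by rewrite spmono_indicator big_pred0.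
have mono_pq : I (spmono s1 s2 a (ind (pred2 p q)) - mul (a p) (a q)).
  rewrite spmono_indicator -big_filter.
  have [->|->] := filter_pred2_uniq enum_uniq (mem_index_enum p) (mem_index_enum q) pq;
    rewrite !big_cons big_nil !spmul1r; [by rewrite subrr | exact: comm_qp].
exists [:: ind (pred2 p q); ind (pred1 p); ind (pred1 q); ind pred0], c; split.
- by apply: (@map_uniq _ _ key); rewrite /= k_pq k_p k_q k_0.
- have spCN x : spC (- x) = - spC x by rewrite /spC !polyCN.
  rewrite !big_cons big_nil /c k_pq k_p k_q k_0 mono1 mono1 mono0 !spmulCl.
  rewrite spC1 mul1r mulr1 !spCN !mulNr addr0.
  set M := mul (a p) (a q) in mono_pq rel *.
  set E := spC u * a p + spC v * a q - spC w in rel *.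
  have IEM : I (E - M) by have := IB _ _ I0 rel; rewrite sub0r opprB.
  have := IB _ _ mono_pq IEM; rewrite opprB addrA subrK /E.
  by rewrite !opprD opprK !addrA.
- by exists (ind (pred2 p q)); rewrite ?mem_head // /c k_pq oner_eq0.
Qed.

End SkewCoefficients.

Section Dichotomy.

Variables (D : unitRingType) (s1 s2 s2inv : D -> D).
Hypotheses (s10 : s1 0 = 0) (s20 : s2 0 = 0) (s2invK : cancel s2inv s2).
Hypothesis D_division : forall x : D, x != 0 -> x \is a GRing.unit.
Hypothesis not_inner : forall k1 k2 : nat, (0 < k1)%N -> (0 < k2)%N ->
  ~ is_inner (fun r => iter k1 s1 (iter k2 s2inv r)).

Lemma automorphic_no_t1_or_no_t2 (x : skewpoly D) (tau : D -> D) :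
  (forall b, mixed_ideal (spmul s1 s2 x (spC b) - spC (tau b) * x)) ->
  no_t1_terms x \/ no_t2_terms x.
Proof.
move=> x_aut; case: (classic (no_t1_terms x)) => [|not_t1]; [by left | right].
move=> j j_gt0; case: (eqVneq x`_j`_0 0) => // w_nz; case: not_t1 => i i_gt0.
case: (eqVneq x`_0`_i 0) => // u_nz; case: (not_inner i_gt0 j_gt0).
apply: (intertwined_is_inner (D_division u_nz) (D_division w_nz)
          (iter_cancel j s2invK)) => b.
  exact: (mixed_automorphic_t1 s10 s20 (x_aut b)).
exact: (mixed_automorphic_t2 s10 s20 (x_aut b)).
Qed.

End Dichotomy.

Unset Implicit Arguments. Set Strict Implicit.

Theorem proposition5p11 (k : fieldType) (D : unitAlgType k)
  (HD : forall x : D, x != 0 -> x \is a GRing.unit)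
  (s1 s2 : {lrmorphism D -> D}) (s2inv : D -> D)
  (bij1 : bijective s1) (s2K : cancel s2 s2inv) (s2invK : cancel s2inv s2)
  (comm12 : forall x, s1 (s2 x) = s2 (s1 x))
  (Hinner : forall k1 k2 : nat, (0 < k1)%N -> (0 < k2)%N ->
     ~ is_inner (fun r => iter k1 s1 (iter k2 s2inv r))) :
  ~ tuple_aut_normalizable s1 s2.
Proof.
have s10 := rmorph0 s1; have s20 := rmorph0 s2.
have s11 := rmorph1 s1; have s21 := rmorph1 s2.
move=> /(_ _ (sp_ideal_mixed s10 s20) (@mixed_ideal_proper D)).
case=> m [a [tau [_ [_ [a_comm a_aut a_indep [g g_span]]]]]].
have {}a_aut l b : mixed_ideal (spmul s1 s2 (a l) (spC b) - spC (tau l b) * a l).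
  by rewrite -(spmulCl s10 s20); apply: a_aut.
case: (classic (forall l, no_t2_terms (a l))) => [a2|/not_all_ex_not [q q_not_t2]].
  exact: (not_finite_over_no_t2_terms s10 s20 a2 g_span).
case: (classic (forall l, no_t1_terms (a l))) => [a1|/not_all_ex_not [p p_not_t1]].
  exact: (not_finite_over_no_t1_terms s10 s20 a1 g_span).
have a_split l := automorphic_no_t1_or_no_t2 s10 s20 s2invK HD Hinner (a_aut l).
have q_t1 : no_t1_terms (a q) by case: (a_split q).
have p_t2 : no_t2_terms (a p) by case: (a_split p).
have qp : q != p by apply/eqP => eq_qp; apply: p_not_t1; rewrite -eq_qp.
have [s [c [s_uniq s_rel [al al_s]]]] := quadratic_relation_dependent s10 s20 s11 s21
  (sp_ideal_mixed s10 s20) qp (a_comm _ _) (mixed_relation s10 s20 q_t1 p_t2 (a_aut q)).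
by rewrite (a_indep s c s_uniq s_rel al al_s) eqxx.
Qed.
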